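(* Let $\nu$ be a probability distribution on $\mathbb{R}^k$, $\mathcal{G}$ a class of measurable maps $\mathbb{R}^k\to\mathbb{R}^d$, $\mathcal{F}$ a symmetric class of real functions and $\Omega\subseteq\mathbb{R}^d$. Assume $\mu$ and $g_\#\nu$ are supported on $\Omega$ for all $g\in\mathcal{G}$. Let $\widetilde\mu_n$ be any probability distribution supported on $\Omega$, let $Z_1,\dots,Z_m$ be points of $\mathbb{R}^k$ with $\widehat\nu_m=\frac1m\sum_j\delta_{Z_j}$, let $\epsilon_{opt}\ge 0$, and let $\widetilde g_n^*\in\mathcal{G}$ with $d_{\mathcal{F}}(\widetilde\mu_n,(\widetilde g_n^* )_\#\nu)\le\inf_{\phi\in\mathcal{G}}d_{\mathcal{F}}(\widetilde\mu_n,\phi_\#\nu)+\epsilon_{opt}$ and $\widetilde g_{n,m}^*\in\mathcal{G}$ with $d_{\mathcal{F}}(\widetilde\mu_n,(\widetilde g_{n,m}^* )_\#\widehat\nu_m)\le\inf_{\phi\in\mathcal{G}}d_{\mathcal{F}}(\widetilde\mu_n,\phi_\#\widehat\nu_m)+\epsilon_{opt}$. Then for any function class $\mathcal{H}$ defined on $\Omega$, $$d_{\mathcal{H}}(\mu,(\widetilde g_n^* )_\#\nu)\le\epsilon_{opt}+2\mathcal{E}(\mathcal{H},\mathcal{F},\Omega)+\inf_{g\in\mathcal{G}}d_{\mathcal{F}}(\widetilde\mu_n,g_\#\nu)+d_{\mathcal{F}}(\mu,\widetilde\mu_n)\land d_{\mathcal{H}}(\mu,\widetilde\mu_n),$$ $$d_{\mathcal{H}}(\mu,(\widetilde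 g_{n,m}^* )_\#\nu)\le\epsilon_{opt}+2\mathcal{E}(\mathcal{H},\mathcal{F},\Omega)+\inf_{g\in\mathcal{G}}d_{\mathcal{F}}(\widetilde\mu_n,g_\#\nu)+d_{\mathcal{F}}(\mu,\widetilde\mu_n)\land d_{\mathcal{H}}(\mu,\widetilde\mu_n)+2d_{\mathcal{F}\circ\mathcal{G}}(\nu,\widehat\nu_m).$$
   Context: $\mathcal{F}$ symmetric means $f\in\mathcal{F}\Rightarrow -f\in\mathcal{F}$. $d_{\mathcal{F}}(\mu,\gamma)=\sup_{f\in\mathcal{F}}\mathbb{E}_\mu[f]-\mathbb{E}_\gamma[f]$; $g_\#\nu(A)=\nu(g^{-1}(A))$; $\mathcal{F}\circ\mathcal{G}=\{f\circ g:f\in\mathcal{F},g\in\mathcal{G}\}$; $\mathcal{E}(\mathcal{H},\mathcal{F},\Omega)=\sup_{h\in\mathcal{H}}\inf_{f\in\mathcal{F}}\|h-f\|_{L^\infty(\Omega)}$; $a\land b=\min(a,b)$. *)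

From HB Require Import structures.
From mathcomp Require Import all_boot all_order all_algebra.
From mathcomp Require Import all_classical all_reals all_analysis.
Set Implicit Arguments. Unset Strict Implicit. Unset Printing Implicit Defensive.
Import Order.TTheory GRing.Theory Num.Theory.
Import numFieldNormedType.Exports.
Local Open Scope classical_set_scope.
Local Open Scope ring_scope.

(* R^n (as row vectors) equipped with its Borel sigma-algebra, i.e. the
   sigma-algebra generated by the open sets of the product topology. *)
Definition Rvec (R : realType) (n : nat) := g_sigma_algebraType (@open 'rV[R]_n).

Section defs.
Local Open Scope ereal_scope.
Context {R : realType}.

Definition expect d (T : measurableType d) (mu : set T -> \bar R) (f : T -> R)
  : \bar R := \int[mu]_x (f x)%:E.

Definition ipm d (T : measurableType d) (F : set (T -> R))
  (mu gam : set T -> \bar R) : \bar R :=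
  ereal_sup [set expect mu f - expect gam f | f in F].

Definition symmetric_class (T : Type) (F : set (T -> R)) :=
  forall f, F f -> F (fun x => (- f x)%R).

Definition comp_class (X Y : Type) (F : set (Y -> R)) (G : set (X -> Y))
  : set (X -> R) := [set h | exists f g, [/\ F f, G g & h = f \o g]].

Definition empirical d (T : measurableType d) (m : nat) (Z : 'I_m -> T)
  : set T -> \bar R :=
  fun A => ((m%:R)^-1)%R%:E * \sum_(j < m) \d_(Z j) A.

Definition sup_dist (T : Type) (Om : set T) (h f : T -> R) : \bar R :=
  ereal_sup [set (`|h x - f x|%R)%:E | x in Om].

Definition approx_err (T : Type) (H F : set (T -> R)) (Om : set T) : \bar R :=
  ereal_sup [set ereal_inf [set sup_dist Om h f | f in F] | h in H].

Definition supported_on d (T : measurableType d) (mu : set T -> \bar R)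
  (Om : set T) := mu.-negligible (~` Om).

End defs.

From HB Require Import structures.
From mathcomp Require Import all_boot all_order all_algebra.
From mathcomp Require Import all_classical all_reals all_analysis.
From mathcomp Require Import measurable_realfun.

(* For h in H and f in F, the difference E_mu h - E_gam h telescopes through
   E_mu f (or E_mut h), E_mut f and E_gam f. The two terms comparing h with f
   under a probability supported on Om are at most ||h - f||_{L^oo(Om)}, the
   others at most d_F(mu, mut) (or d_H(mu, mut)) and d_F(mut, gam). Taking the
   infimum over f and the supremum over h gives
   d_H(mu, gam) <= 2 E(H, F, Om) + d_F(mu, mut) /\ d_H(mu, mut) + d_F(mut, gam),
   and for gam = g#nu the last term is controlled by the near-optimality of g.
   Since E_{g#nu} f = E_nu (f o g), replacing nu by the empirical measure
   changes d_F(mut, g#.) by at most d_{F o G}(nu, nu_m); the empirical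
   minimiser pays this once when passing to nu_m and once when coming back. *)

Set Implicit Arguments. Unset Strict Implicit. Unset Printing Implicit Defensive.
Import Order.TTheory GRing.Theory Num.Theory.
Import numFieldNormedType.Exports.
Local Open Scope classical_set_scope.
Local Open Scope ring_scope.
Local Open Scope ereal_scope.

Section ereal_bounds.
Context {R : realType}.

Lemma leeB_telescope (b a c x y : \bar R) :
  b \is a fin_num -> a - b <= x -> b - c <= y -> a - c <= x + y.
Proof.
by move=> bfin abx bcy; rewrite -(subeK a bfin) -[a - b + b - c]addeA; exact: leeD.
Qed.

(* The sign conditions below exclude -oo + +oo, which is -oo in \bar R. *)
Lemma lee_pmul_ereal_infD (k : R) (x a : \bar R) (s : set (\bar R)) :
  (0 < k)%R -> x \is a fin_num -> s !=set0 -> (forall y, s y -> 0 <= y) ->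
  (forall y, s y -> x <= k%:E * y + a) -> x <= k%:E * ereal_inf s + a.
Proof.
move=> k_gt0 /fineK <- [y0 sy0] s_ge0 xs.
have inf_ge0 : 0 <= ereal_inf s by apply/ereal_infP.
case: a xs => [r| |] xs; last 2 first.
- case: (ereal_inf s) inf_ge0 => [t| |] // _.
    by rewrite -EFinM addey ?leey.
  by rewrite gt0_muley ?lte_fin //= leey.
- by have := xs y0 sy0; rewrite addeNy leeNy_eq.
have lb : ((fine x - r) / k)%:E <= ereal_inf s.
  apply/ereal_infP => -[t| |] st; have := xs _ st.
  - by rewrite -EFinM -EFinD !lee_fin ler_pdivrMr // => ?; rewrite mulrC lerBlDr.
  - by rewrite leey.
  - by have := s_ge0 _ st.
case: (ereal_inf s) lb inf_ge0 => [t| |] //.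
- by rewrite -EFinM -EFinD !lee_fin ler_pdivrMr // mulrC lerBlDr.
- by move=> _ _; rewrite gt0_muley ?lte_fin //= leey.
Qed.

Lemma ereal_inf_leD (T : Type) (S : set T) (u v : T -> \bar R) (c : \bar R) :
  S !=set0 -> (forall x, S x -> 0 <= v x) -> (forall x, S x -> u x <= v x + c) ->
  ereal_inf (u @` S) <= ereal_inf (v @` S) + c.
Proof.
move=> [x0 Sx0] v_ge0 uv.
have inf_ge0 : 0 <= ereal_inf (v @` S) by apply/ereal_infP => _ [x Sx <-]; exact: v_ge0.
case: c uv => [r| |] uv.
- rewrite -leeBlDr //; apply/ereal_infP => _ [x Sx <-]; rewrite leeBlDr //.
  by apply: le_trans (uv x Sx); apply: ereal_inf_lbound; exists x.
- by rewrite addey ?leey // gt_eqF // (lt_le_trans _ inf_ge0).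
- have := uv x0 Sx0; rewrite !addeNy leeNy_eq => /eqP <-.
  by apply: ereal_inf_lbound; exists x0.
Qed.

End ereal_bounds.

Section expectation.
Context d (T : measurableType d) (R : realType).
Implicit Types (F : set (T -> R)) (f h : T -> R) (Om : set T).

Lemma expectN (P : {measure set T -> \bar R}) f :
  P.-integrable setT (EFin \o f) -> expect P (fun x => - f x)%R = - expect P f.
Proof.
move=> intf; rewrite /expect.
under eq_integral do rewrite EFinN.
by apply: integralN; rewrite fin_num_adde_defl// fin_numN integrable_neg_fin_num.
Qed.

Lemma expectB_le_ipm F (P Q : set T -> \bar R) f :
  F f -> expect P f - expect Q f <= ipm F P Q.
Proof. by move=> Ff; apply: ereal_sup_ubound; exists f. Qed.

Lemma ipm_ge0 F (P Q : {measure set T -> \bar R}) :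
  F !=set0 -> symmetric_class F ->
  (forall f, F f -> P.-integrable setT (EFin \o f) /\ Q.-integrable setT (EFin \o f)) ->
  0 <= ipm F P Q.
Proof.
move=> [f Ff] sF Fint; have [iP iQ] := Fint f Ff.
have [diff_ge0|diff_lt0] := leP 0 (expect P f - expect Q f).
  exact: le_trans diff_ge0 (expectB_le_ipm _ _ Ff).
apply: le_trans (expectB_le_ipm P Q (sF f Ff)).
have Qfin : expect Q f \is a fin_num by exact: integrable_fin_num.
by rewrite !expectN // oppeK -oppeB ?fin_num_adde_defl ?fin_numN // oppe_ge0 ltW.
Qed.

Lemma ipm_le_ipmD F (P Q Q' : set T -> \bar R) (c : \bar R) :
  (forall f, F f -> expect Q f \is a fin_num) ->
  (forall f, F f -> expect Q f - expect Q' f <= c) ->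
  ipm F P Q' <= ipm F P Q + c.
Proof.
move=> Qfin QQ'; apply/ereal_supP => _ [f Ff <-].
exact: leeB_telescope (Qfin f Ff) (expectB_le_ipm _ _ Ff) (QQ' f Ff).
Qed.

Lemma sup_dist_ub Om h f x : Om x -> (`|h x - f x|)%:E <= sup_dist Om h f.
Proof. by move=> Omx; apply: ereal_sup_ubound; exists x. Qed.

Lemma sup_distC Om h f : sup_dist Om h f = sup_dist Om f h.
Proof.
by rewrite /sup_dist; congr ereal_sup; apply: eq_imagel => x _; rewrite distrC.
Qed.

End expectation.

Section support.
Context d (T : measurableType d) (R : realType) (P : probability T R) (Om : set T).
Hypothesis POm : supported_on P Om.

Lemma supported_on_nonempty : Om !=set0.
Proof.
case: POm => N [mN PN0 OmN]; apply/set0P/negP => /eqP Om0.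
have : P setT <= P N.
  by apply: le_measure; rewrite ?inE // => x _; apply: OmN; rewrite Om0.
by rewrite PN0 probability_setT lee_fin ler10.
Qed.

Lemma sup_dist_ge0 (h f : T -> R) : 0 <= sup_dist Om h f.
Proof.
have [x Omx] := supported_on_nonempty.
by apply: le_trans (sup_dist_ub h f Omx); rewrite lee_fin.
Qed.

Lemma expectB_le_sup_dist (h f : T -> R) :
  P.-integrable setT (EFin \o h) -> P.-integrable setT (EFin \o f) ->
  expect P h - expect P f <= sup_dist Om h f.
Proof.
move=> ih iff; rewrite /expect -integralB_EFin //.
apply: le_trans (lee_abs _) _.
have mhf : measurable_fun setT (fun x => (h x)%:E - (f x)%:E).
  exact: emeasurable_funB (measurable_int _ ih) (measurable_int _ iff).
apply: le_trans (le_abse_integral _ _ mhf) _ => //.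
rewrite -[leRHS]mule1 -(probability_setT P).
apply: integral_le_bound => //; first exact: sup_dist_ge0.
case: POm => N [mN PN0 OmN]; exists N; split => // x /= x_out; apply: OmN => Omx.
by apply: x_out => _; exact: sup_dist_ub.
Qed.

End support.

Section approximation.
Context d (T : measurableType d) (R : realType).
Variables (mu mut gam : probability T R) (F H : set (T -> R)) (Om : set T).
Hypotheses (F_neq0 : F !=set0) (mu_Om : supported_on mu Om)
  (mut_Om : supported_on mut Om) (gam_Om : supported_on gam Om).
Hypothesis FH_int : forall f, F f \/ H f ->
  [/\ mu.-integrable setT (EFin \o f), mut.-integrable setT (EFin \o f)
    & gam.-integrable setT (EFin \o f)].

Lemma expectB_le_sup_dist_ipm h f : H h -> F f ->
  expect mu h - expect gam h <=
    2%:E * sup_dist Om h f + mine (ipm F mu mut) (ipm H mu mut) + ipm F mut gam.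
Proof.
move=> Hh Ff.
have [hmu hmut hgam] := FH_int (or_intror Hh).
have [fmu fmut fgam] := FH_int (or_introl Ff).
have expect_fin (P : probability T R) g :
    P.-integrable setT (EFin \o g) -> expect P g \is a fin_num.
  by move=> ?; exact: integrable_fin_num.
have gam_hf : expect gam f - expect gam h <= sup_dist Om h f.
  by rewrite sup_distC; exact: expectB_le_sup_dist.
rewrite mule_natl mule2n.
have [FH|HF] := leP (ipm F mu mut) (ipm H mu mut).
- rewrite [leRHS](ACl ((1*3*4)*2))%AC.
  apply: (leeB_telescope (expect_fin _ _ fgam) _ gam_hf).
  apply: (leeB_telescope (expect_fin _ _ fmut) _ (expectB_le_ipm _ _ Ff)).
  apply: (leeB_telescope (expect_fin _ _ fmu) _ (expectB_le_ipm _ _ Ff)).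
  exact: expectB_le_sup_dist.
- rewrite [leRHS](ACl ((3*1*4)*2))%AC.
  apply: (leeB_telescope (expect_fin _ _ fgam) _ gam_hf).
  apply: (leeB_telescope (expect_fin _ _ fmut) _ (expectB_le_ipm _ _ Ff)).
  apply: (leeB_telescope (expect_fin _ _ hmut) (expectB_le_ipm _ _ Hh)).
  exact: expectB_le_sup_dist.
Qed.

Lemma ipm_le_approx_err :
  ipm H mu gam <=
    2%:E * approx_err H F Om + mine (ipm F mu mut) (ipm H mu mut) + ipm F mut gam.
Proof.
apply/ereal_supP => _ [h Hh <-].
have [hmu _ hgam] := FH_int (or_intror Hh).
have inf_le_err : ereal_inf [set sup_dist Om h f | f in F] <= approx_err H F Om.
  by apply: ereal_sup_ubound; exists h.
rewrite -[leRHS]addeA; apply: le_trans (leeD2r _ _); last first.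
  by apply: lee_wpmul2l inf_le_err; rewrite lee_fin.
apply: lee_pmul_ereal_infD => //.
- by rewrite fin_numB; apply/andP; split; exact: integrable_fin_num.
- by case: F_neq0 => f Ff; exists (sup_dist Om h f), f.
- by move=> _ [f Ff <-]; exact: (sup_dist_ge0 mu_Om h f).
- by move=> _ [f Ff <-]; rewrite addeA; exact: expectB_le_sup_dist_ipm.
Qed.

End approximation.

Section empirical.
Context d (T : measurableType d) (R : realType) (m : nat) (W : 'I_m -> T).
Hypothesis m_gt0 : (0 < m)%N.

Lemma expect_empirical (f : T -> R) : measurable_fun setT f ->
  expect (empirical W) f = (m%:R^-1 * \sum_(j < m) f (W j))%:E.
Proof.
move=> mf; case: m W m_gt0 => // n V _.
have inv_ge0 : (0 <= n.+1%:R^-1 :> R)%R by rewrite invr_ge0.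
have mscale_msum :
    empirical V = mscale (NngNum inv_ge0) (msum (fun k => \d_(V (inord k))) n.+1).
  apply/funext => A; rewrite /empirical /mscale /msum /=; congr (_ * _).
  by apply: eq_bigr => j _; rewrite inord_val.
have mfp : measurable_fun setT (EFin \o f^\+%R).
  by rewrite -funerpos; apply/measurable_funepos/measurable_EFinP.
have mfn : measurable_fun setT (EFin \o f^\-%R).
  by rewrite -funerneg; apply/measurable_funeneg/measurable_EFinP.
rewrite /expect mscale_msum integralE funerpos funerneg.
rewrite !ge0_integral_mscale // ?ge0_integral_measure_sum //;
  try by move=> x _; rewrite lee_fin ?funrpos_ge0 ?funrneg_ge0.
under eq_bigr do rewrite integral_dirac // diracT mul1e.
under [X in _ - _ * X]eq_bigr do rewrite integral_dirac // diracT mul1e.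
rewrite /= !sumEFin -!EFinM -EFinB -mulrBr -sumrB.
congr (EFin (_ * _)%R).
by apply: eq_bigr => j _; rewrite inord_val -[in RHS](funrposBneg f).
Qed.

Lemma expect_empiricalN (f : T -> R) : measurable_fun setT f ->
  expect (empirical W) (fun x => - f x)%R = - expect (empirical W) f.
Proof.
move=> mf; rewrite !expect_empirical //; last exact: measurableT_comp.
by rewrite sumrN mulrN EFinN.
Qed.

Lemma expect_empirical_fin_num (f : T -> R) : measurable_fun setT f ->
  expect (empirical W) f \is a fin_num.
Proof. by move=> mf; rewrite expect_empirical. Qed.

End empirical.

Section pushforward.
Context d1 d2 (T1 : measurableType d1) (T2 : measurableType d2) (R : realType).
Variable g : T1 -> T2.
Hypothesis mg : measurable_fun setT g.

Lemma pushforward_probability (nu : probability T1 R) :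
  exists P : probability T2 R, pushforward nu g = P.
Proof. by exists (distribution nu (HB.pack g (isMeasurableFun.Build _ _ _ _ _ mg))). Qed.

Lemma integrable_comp_pushforward (nu : {measure set T1 -> \bar R}) (f : T2 -> \bar R) :
  (pushforward nu g).-integrable setT f -> nu.-integrable setT (f \o g).
Proof.
move=> intf; have mf := measurable_int _ intf.
apply/integrableP; split; first exact: measurableT_comp.
move/integrableP : intf => [_]; apply: le_lt_trans.
by rewrite ge0_integral_pushforward //; exact: measurableT_comp.
Qed.

Lemma expect_pushforward (nu : {measure set T1 -> \bar R}) (f : T2 -> R) :
  (pushforward nu g).-integrable setT (EFin \o f) ->
  expect (pushforward nu g) f = expect nu (f \o g).
Proof.
move=> intf; rewrite /expect integral_pushforward //; first exact: measurable_int intf.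
exact: integrable_comp_pushforward.
Qed.

Lemma pushforward_empirical m (W : 'I_m -> T1) :
  pushforward (empirical W : set T1 -> \bar R) g = empirical (g \o W).
Proof. by []. Qed.

Lemma expect_pushforward_empirical m (W : 'I_m -> T1) (f : T2 -> R) :
  (0 < m)%N -> measurable_fun setT f ->
  expect (pushforward (empirical W) g) f = expect (empirical W) (f \o g).
Proof.
move=> m_gt0 mf.
by rewrite pushforward_empirical !expect_empirical //; exact: measurableT_comp.
Qed.

End pushforward.

Section empirical_shift.
Context d1 d2 (T1 : measurableType d1) (T2 : measurableType d2) (R : realType).
Variables (nu : probability T1 R) (m : nat) (W : 'I_m -> T1).
Variables (F : set (T2 -> R)) (G : set (T1 -> T2)).
Hypotheses (m_gt0 : (0 < m)%N) (F_sym : symmetric_class F)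
  (G_meas : forall g, G g -> measurable_fun setT g)
  (F_int : forall f g, F f -> G g -> (pushforward nu g).-integrable setT (EFin \o f)).

Lemma expectB_pushforward_empirical_le g f : G g -> F f ->
  expect (pushforward nu g) f - expect (pushforward (empirical W) g) f
    <= ipm (comp_class F G) nu (empirical W) /\
  expect (pushforward (empirical W) g) f - expect (pushforward nu g) f
    <= ipm (comp_class F G) nu (empirical W).
Proof.
move=> Gg Ff; have mg := G_meas Gg.
have fg_int : nu.-integrable setT (EFin \o (f \o g)).
  exact (integrable_comp_pushforward mg (F_int Ff Gg)).
have mfg : measurable_fun setT (f \o g).
  by apply/measurable_EFinP; exact: measurable_int fg_int.
have mf : measurable_fun setT f.
  by apply/measurable_EFinP; exact: measurable_int (F_int Ff Gg).
rewrite expect_pushforward ?F_int // expect_pushforward_empirical //.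
split; first by apply: expectB_le_ipm; exists f, g.
have Nfg : comp_class F G ((fun x => - f x)%R \o g).
  by exists (fun x => - f x)%R, g; split => //; exact: F_sym.
apply: le_trans (expectB_le_ipm nu (empirical W) Nfg).
have -> : expect nu ((fun x => - f x)%R \o g) = - expect nu (f \o g) by exact: expectN.
have -> : expect (empirical W) ((fun x => - f x)%R \o g) =
    - expect (empirical W) (f \o g) by exact: expect_empiricalN.
by rewrite oppeK addeC.
Qed.

Lemma ipm_pushforward_le_empirical (Q : set T2 -> \bar R) g : G g ->
  ipm F Q (pushforward nu g)
    <= ipm F Q (pushforward (empirical W) g) + ipm (comp_class F G) nu (empirical W).
Proof.
move=> Gg; apply: ipm_le_ipmD => f Ff; last first.
  exact: (expectB_pushforward_empirical_le Gg Ff).2.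
have mf : measurable_fun setT f.
  by apply/measurable_EFinP; exact: measurable_int (F_int Ff Gg).
rewrite expect_pushforward_empirical //; last exact: G_meas.
exact: expect_empirical_fin_num (measurableT_comp mf (G_meas Gg)).
Qed.

Lemma ipm_empirical_le_pushforward (Q : set T2 -> \bar R) g : G g ->
  ipm F Q (pushforward (empirical W) g)
    <= ipm F Q (pushforward nu g) + ipm (comp_class F G) nu (empirical W).
Proof.
move=> Gg; apply: ipm_le_ipmD => f Ff; last first.
  exact: (expectB_pushforward_empirical_le Gg Ff).1.
apply: integrable_fin_num => //; first exact: G_meas.
by move=> mg; exact: F_int.
Qed.

End empirical_shift.

Theorem lemma24 (R : realType) (k d m : nat)
  (nu : probability (Rvec R k) R)
  (G : set (Rvec R k -> Rvec R d))
  (F : set (Rvec R d -> R))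
  (Om : set (Rvec R d))
  (mu : probability (Rvec R d) R)
  (mut : probability (Rvec R d) R)
  (Z : 'I_m -> Rvec R k)
  (eps : R)
  (gn gnm : Rvec R k -> Rvec R d)
  (H : set (Rvec R d -> R)) :
  (forall g, G g -> measurable_fun setT g) ->
  F !=set0 ->
  symmetric_class F ->
  supported_on mu Om ->
  (forall g, G g -> supported_on (pushforward nu g) Om) ->
  supported_on mut Om ->
  (0 < m)%N ->
  (0 <= eps)%R ->
  (* expectations of the functions of F and H are well defined (finite) *)
  (forall f, F f \/ H f ->
     [/\ mu.-integrable setT (EFin \o f),
         mut.-integrable setT (EFin \o f) &
         forall g, G g -> (pushforward nu g).-integrable setT (EFin \o f)]) ->
  G gn ->
  ipm F mut (pushforward nu gn)
    <= ereal_inf [set ipm F mut (pushforward nu phi) | phi in G] + eps%:E ->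
  G gnm ->
  ipm F mut (pushforward (empirical Z) gnm)
    <= ereal_inf [set ipm F mut (pushforward (empirical Z) phi) | phi in G]
       + eps%:E ->
  ipm H mu (pushforward nu gn)
    <= eps%:E + 2%:E * approx_err H F Om
       + ereal_inf [set ipm F mut (pushforward nu g) | g in G]
       + mine (ipm F mu mut) (ipm H mu mut)
  /\
  ipm H mu (pushforward nu gnm)
    <= eps%:E + 2%:E * approx_err H F Om
       + ereal_inf [set ipm F mut (pushforward nu g) | g in G]
       + mine (ipm F mu mut) (ipm H mu mut)
       + 2%:E * ipm (comp_class F G) nu (empirical Z).
Proof.
move=> G_meas F_neq0 F_sym mu_Om G_Om mut_Om m_gt0 _ FH_int Ggn gn_opt Ggnm gnm_opt.
set E := approx_err H F Om; set M := mine (ipm F mu mut) (ipm H mu mut).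
set I := ereal_inf _; set C := ipm (comp_class F G) nu (empirical Z).
have F_int f g : F f -> G g -> (pushforward nu g).-integrable setT (EFin \o f).
  by move=> /(or_introl (B := H f)) /FH_int[_ _]; apply.
have approx g : G g ->
    ipm H mu (pushforward nu g) <= 2%:E * E + M + ipm F mut (pushforward nu g)
    /\ 0 <= ipm F mut (pushforward nu g).
  move=> Gg; have [P PE] := pushforward_probability (G_meas g Gg) nu.
  have FH_intP f : F f \/ H f -> [/\ mu.-integrable setT (EFin \o f),
      mut.-integrable setT (EFin \o f) & P.-integrable setT (EFin \o f)].
    by move=> /FH_int[? ? /(_ g Gg)]; rewrite PE.
  rewrite PE; split; first by apply: ipm_le_approx_err => //; rewrite -PE; exact: G_Om.
  by apply: ipm_ge0 => // f Ff; have [] := FH_intP f (or_introl Ff).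
have inf_emp :
    ereal_inf [set ipm F mut (pushforward (empirical Z) phi) | phi in G] <= I + C.
  apply: ereal_inf_leD => [|g Gg|g Gg]; first by exists gn.
  - exact: (approx g Gg).2.
  - exact: ipm_empirical_le_pushforward.
split.
- apply: le_trans (approx gn Ggn).1 _.
  by rewrite [leRHS](ACl ((2*4)*(3*1)))%AC; exact: leeD2l.
- apply: le_trans (approx gnm Ggnm).1 _.
  have gnm_bound : ipm F mut (pushforward nu gnm) <= I + C + eps%:E + C.
    apply: le_trans (ipm_pushforward_le_empirical Z m_gt0 F_sym G_meas F_int _ Ggnm) _.
    by apply: leeD2r; apply: le_trans gnm_opt _; exact: leeD2r.
  rewrite [_ * C]mule_natl mule2n [leRHS]addeA.
  by rewrite [leRHS](ACl ((2*4)*(3*5*1*6)))%AC; exact: leeD2l.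
Qed.
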